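(* Let $(X,d)$ be a compact metric space and let $f:X\to X$ be a homeomorphism. If $f$ possesses a wandering point, then ${\rm h_{pol}}(f)\ge1$.
   Context: A point $x$ is wandering for $f$ if there is a neighborhood $U$ of $x$ with $f^k(U)\cap U=\emptyset$ for all $k\ge1$. Polynomial entropy: with $d_n^f(x,y)=\max_{0\le k\le n-1}d(f^k(x),f^k(y))$ and $G_n^f(\varepsilon)$ the minimal number of $d_n^f$-balls of radius $\varepsilon$ covering $X$, ${\rm h_{pol}}(f)=\lim_{\varepsilon\to0}\limsup_{n\to\infty}\frac{\log G_n^f(\varepsilon)}{\log n}$. *)

From HB Require Import structures.
From mathcomp Require Import all_boot all_order all_algebra.
From mathcomp Require Import all_classical all_reals all_analysis.
Set Implicit Arguments. Unset Strict Implicit. Unset Printing Implicit Defensive.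
Import Order.TTheory GRing.Theory Num.Theory.
Import numFieldNormedType.Exports.
Local Open Scope classical_set_scope.
Local Open Scope ring_scope.

Section PolEnt.
Context {R : realType} {X : metricType R}.

Definition wandering (f : X -> X) (x : X) : Prop :=
  exists U : set X, nbhs x U /\
    forall k : nat, (1 <= k)%N -> (iter k f) @` U `&` U = set0.

Definition homeomorphism (f : X -> X) : Prop :=
  continuous f /\ exists g : X -> X,
    [/\ cancel f g, cancel g f & continuous g].

Definition dyn_dist (f : X -> X) (n : nat) (x y : X) : R :=
  \big[Num.max/0]_(k < n) mdist (iter k f x) (iter k f y).

Definition dyn_cover (f : X -> X) (n : nat) (eps : R) (s : seq X) : Prop :=
  forall y : X, exists2 c, c \in s & dyn_dist f n c y < eps.

(* G_n^f(eps): minimal number of d_n^f-balls of radius eps covering X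
   (0 by convention if no finite cover exists, which never happens for
    compact X) *)
Definition G_num (f : X -> X) (n : nat) (eps : R) : nat :=
  match pselect (exists k : nat, `[< exists s : seq X,
                   size s = k /\ dyn_cover f n eps s >]) with
  | left H => ex_minn H
  | right _ => 0%N
  end.

Definition hpol_eps (f : X -> X) (eps : R) : \bar R :=
  limn_esup (fun n : nat => ((ln (G_num f n eps)%:R) / ln n%:R)%:E).

Definition hpol (f : X -> X) : \bar R :=
  lim (hpol_eps f @ 0^'+).

End PolEnt.

(* If x is wandering, the return distances d(x, f^m x), m >= 1, are bounded
   below by some delta > 0.  Hence the backward orbit x, f^-1 x, ..., f^-(n-1) x
   is (n, delta)-separated: applying f^j to f^-i x and f^-j x gives f^(j-i) x
   and x.  No d_n-ball of radius delta/2 contains two of these n points, so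
   G_n(delta/2) >= n and log G_n(delta/2) / log n >= 1.  Since eps |-> limsup_n
   log G_n(eps) / log n is nonincreasing, its limit at 0+ is its supremum. *)
From HB Require Import structures.
From mathcomp Require Import all_boot all_order all_algebra.
From mathcomp Require Import all_classical all_reals all_analysis.
Import Order.TTheory GRing.Theory Num.Theory.
Local Open Scope classical_set_scope.
Local Open Scope ring_scope.

Section dynamical_distance.
Context {R : realType} {X : metricType R}.
Variable f : X -> X.

Lemma continuous_iter k : continuous f -> continuous (iter k f).
Proof.
move=> cf; elim: k => [|k IHk] x /=; first exact: cvg_id.
exact: continuous_comp (IHk x) (cf _).
Qed.

Lemma dyn_dist_ge0 n x y : 0 <= dyn_dist f n x y.
Proof. exact: bigmax_ge_id. Qed.

Lemma le_dyn_dist n x y k : (k < n)%N ->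
  mdist (iter k f x) (iter k f y) <= dyn_dist f n x y.
Proof.
move=> kn.
exact: le_bigmax 0 (fun i : 'I_n => mdist (iter i f x) (iter i f y)) (Ordinal kn).
Qed.

Lemma dyn_distC n x y : dyn_dist f n x y = dyn_dist f n y x.
Proof. by apply: eq_bigr => k _; rewrite metric_sym. Qed.

Lemma dyn_dist_triangle n x y z :
  dyn_dist f n x z <= dyn_dist f n x y + dyn_dist f n y z.
Proof.
apply: bigmax_le => [|k _]; first by rewrite addr_ge0 ?dyn_dist_ge0.
apply: le_trans (metric_triangle _ (iter k f y) _) _.
by rewrite lerD ?le_dyn_dist.
Qed.

Lemma nbhs_dyn_ball n c eps : continuous f -> 0 < eps ->
  nbhs c [set y | dyn_dist f n c y < eps].
Proof.
move=> cf eps0.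
have : \forall y \near c, forall k : 'I_n, mdist (iter k f c) (iter k f y) < eps.
  apply: filter_forall => k.
  by move: (continuous_iter k cf c) => /metricType_numDomainType.cvgrPdist_lt; apply.
by apply: filterS => y Hy /=; apply: bigmax_lt.
Qed.

Lemma dyn_cover_size_ge_separated n eps m (p : nat -> X) s :
  (forall i j, (i < j < m)%N -> 2 * eps <= dyn_dist f n (p i) (p j)) ->
  dyn_cover f n eps s -> (m <= size s)%N.
Proof.
move=> sep cover.
have /choice[c cP] : forall j, exists c, c \in s /\ dyn_dist f n c (p j) < eps.
  by move=> j; have [c ? ?] := cover (p j); exists c.
have cS i j : (i < j < m)%N -> c i != c j.
  move=> ijm; apply/eqP => cij; have [_ ci] := cP i; have [_ cj] := cP j.
  rewrite -cij in cj; have := sep i j ijm; apply/negP; rewrite -ltNge.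
  apply: le_lt_trans (dyn_dist_triangle n (p i) (c i) (p j)) _.
  by rewrite dyn_distC mulr2n mulrDl mul1r ltrD.
rewrite -[m](size_iota 0) -(size_map c); apply: uniq_leq_size; last first.
  by move=> _ /mapP[j _ ->]; have [] := cP j.
rewrite map_inj_in_uniq ?iota_uniq // => i j; rewrite !mem_iota !add0n.
move=> /andP[_ im] /andP[_ jm] cij.
by case: (ltngtP i j) => [ij|ji|//]; [have := cS i j | have := cS j i];
  rewrite ?ij ?ji ?im ?jm cij eqxx => /(_ isT).
Qed.

End dynamical_distance.

Section minimal_covers.
Context {R : realType} {X : metricType R}.
Variable f : X -> X.

Lemma G_num_le_size n eps s : dyn_cover f n eps s -> (G_num f n eps <= size s)%N.
Proof.
move=> cover; rewrite /G_num; case: pselect => [ex|[]]; last first.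
  by exists (size s); apply/asboolP; exists s.
by case: ex_minnP => m _; apply; apply/asboolP; exists s.
Qed.

Hypotheses (cX : compact [set: X]) (cf : continuous f).

(* Finite intersection property: were there no finite cover, the complements of
   finite unions of balls would generate a proper filter, and a cluster point p
   of it would lie outside the ball around p. *)
Lemma exists_dyn_cover n eps : 0 < eps -> exists s, dyn_cover f n eps s.
Proof.
move=> eps0; apply: contrapT => no_cover.
pose outside (s : seq X) := [set y | forall c, c \in s -> ~ dyn_dist f n c y < eps].
pose F := fun A : set X => exists s, outside s `<=` A.
have F_filter : Filter F.
  split; first by exists [::].
    move=> A B [s1 s1A] [s2 s2B]; exists (s1 ++ s2) => y y_out; split.
      by apply: s1A => c cs; apply: y_out; rewrite mem_cat cs.
    by apply: s2B => c cs; apply: y_out; rewrite mem_cat cs orbT.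
  by move=> A B AB [s sA]; exists s => y /sA /AB.
have F_proper : ProperFilter F.
  split=> // -[s s0]; apply: no_cover; exists s => y.
  apply: contrapT => y_uncovered; apply: (s0 y) => c cs lt.
  by apply: y_uncovered; exists c.
have [p [_ Fp]] := cX F F_proper filterT.
have F_out_p : F (outside [:: p]) by exists [:: p].
have [y [y_out near_p]] := Fp _ _ F_out_p (nbhs_dyn_ball f n p eps cf eps0).
by apply: (y_out p); rewrite ?mem_head.
Qed.

Lemma G_num_cover n eps : 0 < eps ->
  exists2 s, size s = G_num f n eps & dyn_cover f n eps s.
Proof.
move=> /(exists_dyn_cover n)[s0 cover0].
rewrite /G_num; case: pselect => [ex|[]]; last first.
  by exists (size s0); apply/asboolP; exists s0.
by case: ex_minnP => m /asboolP[s [sm cover]] _; exists s.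
Qed.

Lemma G_num_gt0 n eps (x : X) : 0 < eps -> (0 < G_num f n eps)%N.
Proof.
move=> /(G_num_cover n)[s <- /(_ x)[c cs _]].
by case: s cs.
Qed.

Lemma G_num_antitone n eps eps' : 0 < eps -> eps <= eps' ->
  (G_num f n eps' <= G_num f n eps)%N.
Proof.
move=> eps0 le_eps; have [s <- cover] := G_num_cover n eps eps0.
apply: G_num_le_size => y; have [c cs lt] := cover y.
by exists c => //; apply: lt_le_trans le_eps.
Qed.

End minimal_covers.

Section backward_orbit.
Context {R : realType} {X : metricType R}.
Variables f g : X -> X.
Hypothesis gK : cancel g f.

Lemma iterDK a b x : iter (a + b) f (iter b g x) = iter a f x.
Proof. by elim: b => [|b IHb]; rewrite ?addn0 // addnS iterSr /= gK. Qed.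

Lemma dyn_dist_backward_orbit n delta x i j :
  (forall m, (0 < m)%N -> delta <= mdist x (iter m f x)) ->
  (i < j < n)%N -> delta <= dyn_dist f n (iter i g x) (iter j g x).
Proof.
move=> return_dist /andP[ij jn].
apply: le_trans (le_dyn_dist f _ _ _ _ jn).
have -> : iter j f (iter i g x) = iter (j - i) f x.
  by rewrite -(iterDK (j - i) i) subnK // ltnW.
have -> : iter j f (iter j g x) = x by rewrite -[j in iter j f]add0n iterDK.
by rewrite metric_sym return_dist // subn_gt0.
Qed.

End backward_orbit.

Lemma wandering_return_dist {R : realType} {X : metricType R} (f : X -> X) x :
  wandering f x ->
  exists2 delta : R, 0 < delta & forall m, (0 < m)%N -> delta <= mdist x (iter m f x).
Proof.
move=> [U [xU U_wandering]].
move: xU; rewrite -metricType_numDomainType.filter_from_mdist_nbhs => -[d d0 dU].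
exists d => // m m0; rewrite leNgt; apply/negP => fmx_near.
have := U_wandering m m0; rewrite -subset0 => /(_ (iter m f x)); apply; split.
  by exists x => //; apply: dU; rewrite mdistxx.
exact: dU fmx_near.
Qed.

Lemma G_num_ge_wandering {R : realType} {X : metricType R} {f g : X -> X} {x : X} :
  compact [set: X] -> continuous f -> cancel g f -> wandering f x ->
  exists2 eps : R, 0 < eps & forall n, (n <= G_num f n eps)%N.
Proof.
move=> cX cf gK /wandering_return_dist[delta delta0 return_dist].
have eps0 : 0 < delta / 2 by rewrite divr_gt0.
exists (delta / 2) => // n; have [s <- cover] := G_num_cover f cX cf n _ eps0.
apply: (dyn_cover_size_ge_separated _ _ _ _ (fun i => iter i g x) _ _ cover).
move=> i j ijn; rewrite mulrC divfK ?pnatr_eq0 //.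
exact: dyn_dist_backward_orbit.
Qed.

Section limsup.
Context {R : realType}.
Local Open Scope ereal_scope.
Implicit Types u v : (\bar R)^nat.

Lemma limn_esup_ge u a N : (forall n, (N <= n)%N -> a <= u n) -> a <= limn_esup u.
Proof.
move=> ge_a; apply: le_ereal_inf_tmp => _ [V [M _ MV] <-].
apply: le_ereal_sup_tmp; exists (u (maxn N M)); last by rewrite ge_a ?leq_maxl.
by exists (maxn N M) => //; apply: MV; rewrite /= leq_maxr.
Qed.

Lemma le_limn_esup u v : (forall n, u n <= v n) -> limn_esup u <= limn_esup v.
Proof.
move=> le_uv; apply: le_ereal_inf_tmp => _ [V FV <-].
apply: le_trans (ereal_inf_lbound _) _; first by exists V.
apply: ge_ereal_sup => _ [n Vn <-].
by apply: le_trans (le_uv n) (ereal_sup_ubound _); exists n.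
Qed.

End limsup.

Section log_ratio.
Context {R : realType}.

Lemma ln_ratio_ge1 (n m : nat) : (1 < n)%N -> (n <= m)%N ->
  1 <= ln (m%:R : R) / ln n%:R.
Proof.
move=> n1 nm; have n0 : (0 < n)%N by apply: ltnW.
have lnn0 : 0 < ln (n%:R : R) by rewrite ln_gt0 // ltr1n.
by rewrite ler_pdivlMr // mul1r ler_ln ?ler_nat // posrE ltr0n // (leq_trans n0).
Qed.

Lemma ler_ln_ratio (n a b : nat) : (0 < a)%N -> (a <= b)%N ->
  ln (a%:R : R) / ln n%:R <= ln (b%:R : R) / ln n%:R.
Proof.
move=> a0 ab; apply: ler_wpM2r.
  by rewrite invr_ge0; case: n => [|n]; [rewrite ln0 | apply: ln_ge0; rewrite ler1n].
by rewrite ler_ln ?ler_nat // posrE ltr0n // (leq_trans a0).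
Qed.

End log_ratio.

Section polynomial_entropy.
Context {R : realType} {X : metricType R}.
Variable f : X -> X.
Implicit Type eps : R.

Lemma hpol_eps_ge1 {eps} : (forall n, (n <= G_num f n eps)%N) -> (1 <= hpol_eps f eps)%E.
Proof.
move=> G_ge; apply: (limn_esup_ge _ _ 2) => n n2.
by rewrite lee_fin ln_ratio_ge1.
Qed.

Lemma hpol_eps_antitone : compact [set: X] -> continuous f -> X ->
  {in `]0, +oo[ &, nonincreasing_fun (hpol_eps f)}.
Proof.
move=> cX cf x eps eps'; rewrite !in_itv /= !andbT => eps0 _ le_eps.
apply: le_limn_esup => n; rewrite lee_fin ler_ln_ratio ?G_num_antitone //.
exact: G_num_gt0 x (lt_le_trans eps0 le_eps).
Qed.

Lemma hpol_eps_le_hpol {eps} :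
  {in `]0, +oo[ &, nonincreasing_fun (hpol_eps f)} ->
  0 < eps -> (hpol_eps f eps <= hpol f)%E.
Proof.
move=> anti eps0.
have cvg_sup := @nonincreasing_at_right_cvge R (hpol_eps f) 0 (BInfty R false) isT anti.
rewrite /hpol (cvg_lim _ cvg_sup); last exact: ereal_hausdorff.
by apply: ereal_sup_ubound; exists eps => //=; rewrite in_itv /= andbT.
Qed.

End polynomial_entropy.

Theorem proposition2p1 (R : realType) (X : metricType R) (f : X -> X) :
  compact [set: X] -> homeomorphism f ->
  (exists x : X, wandering f x) ->
  (1 <= hpol f)%E.
Proof.
move=> cX [cf [g [_ gK _]]] [x wx].
have [eps eps0 G_ge] := G_num_ge_wandering cX cf gK wx.
apply: le_trans (hpol_eps_ge1 f G_ge) (hpol_eps_le_hpol f _ eps0).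
exact: hpol_eps_antitone.
Qed.
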